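(* Let $\mathbf{L}$ be an intermediate propositional logic. If $\varepsilon\tau(\mathbf{L})$ has the first $\varepsilon\tau$-theorem, then $\vdash_{\mathbf{L}}B_m$ for some $m\ge 2$.
   Context: An intermediate propositional logic is a set of propositional formulas containing intuitionistic propositional logic, contained in classical logic, closed under modus ponens and substitution. $\vdash_{\mathbf{L}}A$ (for quantifier-free formulas of a first-order language) means $A$ is derivable using substitution instances of formulas of $\mathbf{L}$ and modus ponens. $\varepsilon\tau$-terms: for any formula $A(x)$, $\varepsilon x\,A(x)$ and $\tau x\,A(x)$ are terms. Critical formulas: $A(t)\to A(\varepsilon x\,A(x))$ and $A(\tau x\,A(x))\to A(t)$, $t$ any term. $\vdash_{\varepsilon\tau(\mathbf{L})}B$ means $B$ is derivable (quantifier-free language with $\varepsilon\tau$-terms) from critical formulas using substitution instances of $\mathbf{L}$ and modus ponens. A term is $\varepsilon\tau$-free if it contains no $\varepsilon\tau$-terms. $\varepsilon\tau(\mathbf{L})$ has the first $\varepsilon\tau$-theorem if whenever $\vdash_{\varepsilon\tau(\mathbf{L})}A(e_1,\dots,e_n)$ for some $\varepsilon$- or $\tau$-terms $e_1,\dots,e_n$, there are $\varepsilon\tau$-free terms $t_i^j$ such that $\vdash_{\mathbf{L}}A(t_1^1,\dots,t_n^1)\lor\dots\lor A(t_1^k,\dots,t_n^k)$. $B_m$ is the schema $(A_1\to A_2)\lor(A_2\to A_3)\lor\dots\lor(A_m\to A_{m+1})$. *)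

From Stdlib Require Import List Arith Bool.
Import ListNotations.

Inductive pform : Type :=
| PVar : nat -> pform
| PBot : pform
| PAnd : pform -> pform -> pform
| POr  : pform -> pform -> pform
| PImp : pform -> pform -> pform.

Inductive IPC : pform -> Prop :=
| ipc_k  : forall A B, IPC (PImp A (PImp B A))
| ipc_s  : forall A B C,
    IPC (PImp (PImp A (PImp B C)) (PImp (PImp A B) (PImp A C)))
| ipc_and1 : forall A B, IPC (PImp (PAnd A B) A)
| ipc_and2 : forall A B, IPC (PImp (PAnd A B) B)
| ipc_andI : forall A B, IPC (PImp A (PImp B (PAnd A B)))
| ipc_or1 : forall A B, IPC (PImp A (POr A B))
| ipc_or2 : forall A B, IPC (PImp B (POr A B))
| ipc_orE : forall A B C,
    IPC (PImp (PImp A C) (PImp (PImp B C) (PImp (POr A B) C)))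
| ipc_efq : forall A, IPC (PImp PBot A)
| ipc_mp : forall A B, IPC (PImp A B) -> IPC A -> IPC B.

Fixpoint peval (v : nat -> bool) (A : pform) : bool :=
  match A with
  | PVar i => v i
  | PBot => false
  | PAnd A B => peval v A && peval v B
  | POr A B => peval v A || peval v B
  | PImp A B => implb (peval v A) (peval v B)
  end.

Definition CPC (A : pform) : Prop := forall v, peval v A = true.

Fixpoint psubst (s : nat -> pform) (A : pform) : pform :=
  match A with
  | PVar i => s i
  | PBot => PBot
  | PAnd A B => PAnd (psubst s A) (psubst s B)
  | POr A B => POr (psubst s A) (psubst s B)
  | PImp A B => PImp (psubst s A) (psubst s B)
  end.

Definition intermediate_logic (L : pform -> Prop) : Prop :=
  (forall A, IPC A -> L A) /\
  (forall A, L A -> CPC A) /\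
  (forall A B, L (PImp A B) -> L A -> L B) /\
  (forall s A, L A -> L (psubst s A)).

Fixpoint pdisj (l : list pform) : pform :=
  match l with
  | [] => PBot
  | [x] => x
  | x :: r => POr x (pdisj r)
  end.

(* The schema B_m : (A1 -> A2) \/ ... \/ (Am -> Am+1), instantiated by As. *)
Definition Bm (m : nat) (As : nat -> pform) : pform :=
  pdisj (map (fun i => PImp (As i) (As (S i))) (seq 1 m)).

(* Variables are de Bruijn indices; [Eps A] and [Tau A] bind index 0 in A.
   Function and predicate symbols are indexed by nat and may be applied to
   argument lists of any length (countably many symbols of every arity). *)
Inductive term : Type :=
| Var : nat -> term
| Fn  : nat -> terms -> term
| Eps : form -> term
| Tau : form -> term
with terms : Type :=
| TNil : terms
| TCons : term -> terms -> terms
with form : Type :=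
| Atom : nat -> terms -> form
| Bot : form
| And : form -> form -> form
| Or  : form -> form -> form
| Imp : form -> form -> form.

Definition upren (r : nat -> nat) (k : nat) : nat :=
  match k with 0 => 0 | S k => S (r k) end.

Fixpoint ren_term (r : nat -> nat) (t : term) : term :=
  match t with
  | Var n => Var (r n)
  | Fn f ts => Fn f (ren_terms r ts)
  | Eps A => Eps (ren_form (upren r) A)
  | Tau A => Tau (ren_form (upren r) A)
  end
with ren_terms (r : nat -> nat) (ts : terms) : terms :=
  match ts with
  | TNil => TNil
  | TCons t ts => TCons (ren_term r t) (ren_terms r ts)
  end
with ren_form (r : nat -> nat) (A : form) : form :=
  match A with
  | Atom p ts => Atom p (ren_terms r ts)
  | Bot => Bot
  | And A B => And (ren_form r A) (ren_form r B)
  | Or A B => Or (ren_form r A) (ren_form r B)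
  | Imp A B => Imp (ren_form r A) (ren_form r B)
  end.

Definition up (s : nat -> term) (k : nat) : term :=
  match k with 0 => Var 0 | S k => ren_term S (s k) end.

Fixpoint subst_term (s : nat -> term) (t : term) : term :=
  match t with
  | Var n => s n
  | Fn f ts => Fn f (subst_terms s ts)
  | Eps A => Eps (subst_form (up s) A)
  | Tau A => Tau (subst_form (up s) A)
  end
with subst_terms (s : nat -> term) (ts : terms) : terms :=
  match ts with
  | TNil => TNil
  | TCons t ts => TCons (subst_term s t) (subst_terms s ts)
  end
with subst_form (s : nat -> term) (A : form) : form :=
  match A with
  | Atom p ts => Atom p (subst_terms s ts)
  | Bot => Bot
  | And A B => And (subst_form s A) (subst_form s B)
  | Or A B => Or (subst_form s A) (subst_form s B)
  | Imp A B => Imp (subst_form s A) (subst_form s B)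
  end.

(* A(t): instantiate the bound variable (index 0) of A by t. *)
Definition scons0 (t : term) (k : nat) : term :=
  match k with 0 => t | S k => Var k end.
Definition inst0 (A : form) (t : term) : form := subst_form (scons0 t) A.

Fixpoint etfree_term (t : term) : Prop :=
  match t with
  | Var _ => True
  | Fn _ ts => etfree_terms ts
  | Eps _ => False
  | Tau _ => False
  end
with etfree_terms (ts : terms) : Prop :=
  match ts with
  | TNil => True
  | TCons t ts => etfree_term t /\ etfree_terms ts
  end.

Fixpoint etfree_form (A : form) : Prop :=
  match A with
  | Atom _ ts => etfree_terms ts
  | Bot => True
  | And A B => etfree_form A /\ etfree_form B
  | Or A B => etfree_form A /\ etfree_form B
  | Imp A B => etfree_form A /\ etfree_form B
  end.

Definition is_et (e : term) : Prop :=
  match e with Eps _ => True | Tau _ => True | _ => False end.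

Fixpoint finst (s : nat -> form) (A : pform) : form :=
  match A with
  | PVar i => s i
  | PBot => Bot
  | PAnd A B => And (finst s A) (finst s B)
  | POr A B => Or (finst s A) (finst s B)
  | PImp A B => Imp (finst s A) (finst s B)
  end.

Inductive Lder (L : pform -> Prop) : form -> Prop :=
| Lder_inst : forall F s, L F -> Lder L (finst s F)
| Lder_mp : forall A B, Lder L (Imp A B) -> Lder L A -> Lder L B.

Inductive ETder (L : pform -> Prop) : form -> Prop :=
| ETder_inst : forall F s, L F -> ETder L (finst s F)
| ETder_crit_eps : forall A t, ETder L (Imp (inst0 A t) (inst0 A (Eps A)))
| ETder_crit_tau : forall A t, ETder L (Imp (inst0 A (Tau A)) (inst0 A t))
| ETder_mp : forall A B, ETder L (Imp A B) -> ETder L A -> ETder L B.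

Fixpoint fdisj (l : list form) : form :=
  match l with
  | [] => Bot
  | [x] => x
  | x :: r => Or x (fdisj r)
  end.

(* The substitution x |-> e x for x in xs, identity elsewhere;
   A(e_1,...,e_n) is [subst_form (sel xs e) A] with xs = [x_1;...;x_n]. *)
Definition sel (xs : list nat) (e : nat -> term) (k : nat) : term :=
  if existsb (Nat.eqb k) xs then e k else Var k.

Definition first_et_theorem (L : pform -> Prop) : Prop :=
  forall (A : form) (xs : list nat) (e : nat -> term),
    etfree_form A ->
    (forall x, In x xs -> is_et (e x)) ->
    ETder L (subst_form (sel xs e) A) ->
    exists (t0 : nat -> term) (ts : list (nat -> term)),
      (forall t, In t (t0 :: ts) -> forall x, In x xs -> etfree_term (t x)) /\
      Lder L (fdisj (map (fun t => subst_form (sel xs t) A) (t0 :: ts))).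

(* The tau-critical formula P(tau) -> P(f tau) is an et(L)-derivable instance of
   F(x) := P(x) -> P(f x), so the first et-theorem yields an L-derivable disjunction
   of instances P(t_i) -> P(f t_i) for some terms t_i.  Reading every atom P(t) as the
   propositional formula A_(1+d), where d is the number of leading applications of f
   in t, maps L-derivations to theorems of L and turns that disjunction into a
   subdisjunction of B_m as soon as m exceeds every such depth. *)
From Stdlib Require Import List Arith Bool Lia.
Import ListNotations.

Lemma IPC_imp_refl A : IPC (PImp A A).
Proof.
  eapply ipc_mp; [eapply ipc_mp|].
  - apply (ipc_s A (PImp A A) A).
  - apply ipc_k.
  - apply (ipc_k A A).
Qed.

Lemma IPC_imp_trans A B C : IPC (PImp A B) -> IPC (PImp B C) -> IPC (PImp A C).
Proof.
  intros HAB HBC.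
  eapply ipc_mp; [eapply ipc_mp|].
  - apply (ipc_s A B C).
  - eapply ipc_mp; [apply ipc_k | exact HBC].
  - exact HAB.
Qed.

Lemma IPC_or_elim A B C :
  IPC (PImp A C) -> IPC (PImp B C) -> IPC (PImp (POr A B) C).
Proof.
  intros HAC HBC.
  eapply ipc_mp; [eapply ipc_mp|]; [apply ipc_orE | exact HAC | exact HBC].
Qed.

Lemma IPC_pdisj_intro X l : In X l -> IPC (PImp X (pdisj l)).
Proof.
  induction l as [|Y [|Z l] IH]; intros HX.
  - destruct HX.
  - destruct HX as [<-|[]]. apply IPC_imp_refl.
  - destruct HX as [<-|HX].
    + apply ipc_or1.
    + eapply IPC_imp_trans; [apply IH, HX | apply ipc_or2].
Qed.

Lemma IPC_pdisj_incl l1 l2 : incl l1 l2 -> IPC (PImp (pdisj l1) (pdisj l2)).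
Proof.
  induction l1 as [|X [|Y l1] IH]; intros Hincl.
  - apply ipc_efq.
  - apply IPC_pdisj_intro, Hincl. now left.
  - apply IPC_or_elim.
    + apply IPC_pdisj_intro, Hincl. now left.
    + apply IH. intros Z HZ. apply Hincl. now right.
Qed.

Lemma intermediate_logic_IPC_mp L A B :
  intermediate_logic L -> L A -> IPC (PImp A B) -> L B.
Proof. intros (L_IPC & _ & L_mp & _) HA HAB. exact (L_mp _ _ (L_IPC _ HAB) HA). Qed.

Lemma Bm_of_subdisjunction L As m ns :
  intermediate_logic L ->
  (forall n, In n ns -> 1 <= n <= m) ->
  L (pdisj (map (fun n => PImp (As n) (As (S n))) ns)) -> L (Bm m As).
Proof.
  intros HL Hns Hdisj.
  apply (intermediate_logic_IPC_mp L _ _ HL Hdisj), IPC_pdisj_incl.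
  intros X HX. apply in_map_iff in HX as [n [<- Hn]].
  apply (in_map (fun i => PImp (As i) (As (S i)))), in_seq. specialize (Hns n Hn). lia.
Qed.

Fixpoint pinterp (v : nat -> terms -> pform) (F : form) : pform :=
  match F with
  | Atom p ts => v p ts
  | Bot => PBot
  | And A B => PAnd (pinterp v A) (pinterp v B)
  | Or A B => POr (pinterp v A) (pinterp v B)
  | Imp A B => PImp (pinterp v A) (pinterp v B)
  end.

Lemma pinterp_finst v s G :
  pinterp v (finst s G) = psubst (fun i => pinterp v (s i)) G.
Proof. induction G; simpl; congruence. Qed.

Lemma pinterp_fdisj v l : pinterp v (fdisj l) = pdisj (map (pinterp v) l).
Proof.
  induction l as [|X [|Y l] IH]; [reflexivity | reflexivity |].
  change (POr (pinterp v X) (pinterp v (fdisj (Y :: l))) =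
          POr (pinterp v X) (pdisj (map (pinterp v) (Y :: l)))).
  now rewrite IH.
Qed.

Lemma Lder_pinterp L v F :
  (forall A B, L (PImp A B) -> L A -> L B) ->
  (forall s A, L A -> L (psubst s A)) ->
  Lder L F -> L (pinterp v F).
Proof.
  intros L_mp L_subst HF.
  induction HF as [G s HG | A B _ IHAB _ IHA].
  - rewrite pinterp_finst. now apply L_subst.
  - exact (L_mp _ _ IHAB IHA).
Qed.

Definition fsucc (t : term) : term := Fn 0 (TCons t TNil).
Definition Patom (t : term) : form := Atom 0 (TCons t TNil).

Fixpoint fsucc_depth (t : term) : nat :=
  match t with
  | Fn 0 (TCons s TNil) => S (fsucc_depth s)
  | _ => 0
  end.

Definition depth_reading (As : nat -> pform) (_ : nat) (ts : terms) : pform :=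
  match ts with
  | TCons t _ => As (S (fsucc_depth t))
  | TNil => As 1
  end.

Lemma pinterp_depth_reading_succ_step As t :
  pinterp (depth_reading As) (Imp (Patom t) (Patom (fsucc t))) =
  PImp (As (S (fsucc_depth t))) (As (S (S (fsucc_depth t)))).
Proof. reflexivity. Qed.

Definition succ_step : form := Imp (Patom (Var 0)) (Patom (fsucc (Var 0))).

Lemma succ_step_sel0 e :
  subst_form (sel [0] e) succ_step = Imp (Patom (e 0)) (Patom (fsucc (e 0))).
Proof. reflexivity. Qed.

Lemma ETder_succ_step_tau L :
  ETder L (subst_form (sel [0] (fun _ => Tau (Patom (Var 0)))) succ_step).
Proof. exact (ETder_crit_tau L (Patom (Var 0)) (fsucc (Tau (Patom (Var 0))))). Qed.

Lemma le_list_max n l : In n l -> n <= list_max l.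
Proof.
  intros Hn. pose proof (proj1 (list_max_le l _) (le_n _)) as Hall.
  rewrite Forall_forall in Hall. exact (Hall n Hn).
Qed.

Theorem mainTheorem3 (L : pform -> Prop) :
  intermediate_logic L ->
  first_et_theorem L ->
  exists m : nat, 2 <= m /\ forall As : nat -> pform, L (Bm m As).
Proof.
  intros HL Hfirst.
  destruct (Hfirst succ_step [0] (fun _ => Tau (Patom (Var 0))))
    as [t0 [ts [_ Hdisj]]].
  - simpl. tauto.
  - intros x _. exact I.
  - apply ETder_succ_step_tau.
  - set (ns := map (fun t : nat -> term => S (fsucc_depth (t 0))) (t0 :: ts)).
    exists (max 2 (list_max ns)). split; [lia|]. intros As.
    pose proof HL as (_ & _ & L_mp & L_subst).
    apply (Bm_of_subdisjunction L As _ ns HL).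
    + intros n Hn. pose proof (le_list_max n ns Hn).
      unfold ns in Hn. apply in_map_iff in Hn as [t [<- _]]. lia.
    + pose proof (Lder_pinterp L (depth_reading As) _ L_mp L_subst Hdisj) as HAs.
      rewrite pinterp_fdisj, map_map in HAs.
      unfold ns. rewrite map_map.
      erewrite map_ext; [exact HAs|]. intros t.
      cbv beta. now rewrite succ_step_sel0, pinterp_depth_reading_succ_step.
Qed.
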